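(* Let $\alpha\in(0,1]$ and let $n$ be such that $n^\alpha=2^q$ for a positive integer $q$. Let $R\subset \mathrm{conv}(A_n)$ be an open axis-aligned rectangle of width $w(R)>1$, height $h(R)>1$ and area $w(R)h(R)\ge 4n^\alpha$. Then $B_n\cap R\neq\emptyset$.
   Context: Let $A_n=\{(i,j)\in\mathbb{Z}^2: 0\le i,j\le 14n\}$, so $\mathrm{conv}(A_n)=[0,14n]^2$. The sparse grid $B_n\subseteq A_n$ is the set of points of $A_n$ of at least one of the following forms: (1) $(i,j)$ with $n^\alpha \mid ij$; (2) $(i+k,j+k)$ with $n^\alpha\mid i$, $n^\alpha\mid j$, $k\in\{1,\dots,n^\alpha\}$ (forward diagonals); (3) $(i+k,j-k)$ with $n^\alpha\mid i$, $n^\alpha\mid j$, $k\in\{1,\dots,n^\alpha\}$ (backward diagonals). For an open rectangle $R=(x_1,x_2)\times(y_1,y_2)$, $w(R)=x_2-x_1$ and $h(R)=y_2-y_1$. *)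

From Stdlib Require Import Reals ZArith.
Open Scope R_scope.

Definition in_A (n : nat) (i j : Z) : Prop :=
  (0 <= i <= 14 * Z.of_nat n)%Z /\ (0 <= j <= 14 * Z.of_nat n)%Z.

(* Sparse grid B_n, with the integer m playing the role of n^alpha. *)
Definition in_B (m : Z) (n : nat) (i j : Z) : Prop :=
  in_A n i j /\
  ( (m | i * j)%Z
    \/ (exists i0 j0 k : Z, (m | i0)%Z /\ (m | j0)%Z /\ (1 <= k <= m)%Z /\
                            i = (i0 + k)%Z /\ j = (j0 + k)%Z)
    \/ (exists i0 j0 k : Z, (m | i0)%Z /\ (m | j0)%Z /\ (1 <= k <= m)%Z /\
                            i = (i0 + k)%Z /\ j = (j0 - k)%Z) ).

(* Choose a, b with 2^a < w(R) <= 2^(a+1) and 2^b < h(R) <= 2^(b+1). The open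
   interval of length w(R) contains a multiple i of 2^a, that of length h(R) a
   multiple j of 2^b, and 4 2^q <= w(R) h(R) <= 4 2^(a+b) forces q <= a + b, so
   2^q divides i j and (i, j) is a point of B_n of the first kind. *)
From Stdlib Require Import Reals ZArith Lra Lia Psatz.
Open Scope R_scope.

Lemma exists_multiple_in_interval (d x1 x2 : R) :
  0 < d -> d < x2 - x1 -> exists z : Z, x1 < IZR z * d < x2.
Proof.
  intros Hd Hlen.
  destruct (archimed (x1 / d)) as [Hup1 Hup2].
  exists (up (x1 / d)).
  assert (Hx1 : x1 = x1 / d * d) by (field; lra).
  split; nra.
Qed.

Lemma pow2_bracket (L : R) : 1 < L -> exists a : nat, 2 ^ a < L <= 2 ^ S a.
Proof.
  intro HL.
  assert (Hbracket : forall N : nat, L <= 2 ^ N -> exists a, 2 ^ a < L <= 2 ^ S a).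
  { induction N as [|N IH]; intro HN.
    - simpl in HN; lra.
    - destruct (Rle_lt_dec L (2 ^ N)) as [Hle|Hlt].
      + exact (IH Hle).
      + exists N; split; assumption. }
  apply (Hbracket (Z.to_nat (up L))).
  destruct (archimed L) as [HupL _].
  assert (Hup_pos : (0 <= up L)%Z) by (apply le_IZR; lra).
  assert (Hlin : (Z.to_nat (up L) < 2 ^ Z.to_nat (up L))%nat)
    by (apply Nat.pow_gt_lin_r; lia).
  apply lt_INR in Hlin.
  rewrite pow_INR, INR_IZR_INZ, Z2Nat.id in Hlin by exact Hup_pos.
  change (INR 2) with 2 in Hlin; lra.
Qed.

Lemma pow2_exponent_sum_ge (q a b : nat) (w h : R) :
  w <= 2 ^ S a -> 0 < h <= 2 ^ S b -> w * h >= 4 * 2 ^ q -> (q <= a + b)%nat.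
Proof.
  intros Hw Hh Harea.
  destruct (Nat.le_gt_cases q (a + b)) as [Hle|Hgt]; [exact Hle|exfalso].
  assert (Hpow : 2 ^ (a + b) < 2 ^ q) by (apply Rlt_pow; [lra|exact Hgt]).
  assert (Hq : 0 < 2 ^ q) by (apply pow_lt; lra).
  assert (Hwh : w * h <= 2 ^ S a * 2 ^ S b)
    by (apply Rmult_le_compat; nra).
  rewrite pow_add in Hpow; simpl in Hwh.
  lra.
Qed.

Lemma Zpow_divide_mul_pow (p z z' : Z) (q a b : nat) :
  (q <= a + b)%nat ->
  (p ^ Z.of_nat q | p ^ Z.of_nat a * z * (p ^ Z.of_nat b * z'))%Z.
Proof.
  intro Hle.
  assert (Hsplit : (p ^ Z.of_nat a * p ^ Z.of_nat b
                    = p ^ Z.of_nat (a + b - q) * p ^ Z.of_nat q)%Z).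
  { rewrite <- !Z.pow_add_r by lia; f_equal; lia. }
  exists (z * z' * p ^ Z.of_nat (a + b - q))%Z.
  transitivity (z * z' * (p ^ Z.of_nat a * p ^ Z.of_nat b))%Z; [ring|].
  rewrite Hsplit; ring.
Qed.

Lemma in_A_of_real_bounds (n : nat) (i j : Z) :
  0 <= IZR i <= 14 * INR n -> 0 <= IZR j <= 14 * INR n -> in_A n i j.
Proof.
  rewrite INR_IZR_INZ, <- mult_IZR.
  intros [Hi0 Hi1] [Hj0 Hj1].
  split; split; apply le_IZR; assumption.
Qed.

Theorem lemma4 (alpha : R) (n q : nat) (x1 x2 y1 y2 : R) :
  0 < alpha <= 1 ->
  (0 < q)%nat ->
  Rpower (INR n) alpha = 2 ^ q ->
  (* R = (x1,x2) x (y1,y2) is contained in conv(A_n) = [0,14n]^2 *)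
  0 <= x1 -> x2 <= 14 * INR n -> 0 <= y1 -> y2 <= 14 * INR n ->
  x2 - x1 > 1 -> y2 - y1 > 1 ->
  (x2 - x1) * (y2 - y1) >= 4 * Rpower (INR n) alpha ->
  exists i j : Z, in_B (2 ^ Z.of_nat q)%Z n i j /\
    x1 < IZR i < x2 /\ y1 < IZR j < y2.
Proof.
  intros _ _ Hm Hx1 Hx2 Hy1 Hy2 Hw Hh Harea.
  rewrite Hm in Harea.
  destruct (pow2_bracket (x2 - x1)) as [a [Ha_lo Ha_hi]]; [lra|].
  destruct (pow2_bracket (y2 - y1)) as [b [Hb_lo Hb_hi]]; [lra|].
  assert (Hpow_a : 0 < IZR (2 ^ Z.of_nat a))
    by (rewrite <- pow_IZR; apply pow_lt; lra).
  assert (Hpow_b : 0 < IZR (2 ^ Z.of_nat b))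
    by (rewrite <- pow_IZR; apply pow_lt; lra).
  rewrite pow_IZR in Ha_lo, Hb_lo.
  destruct (exists_multiple_in_interval _ x1 x2 Hpow_a Ha_lo) as [z Hz].
  destruct (exists_multiple_in_interval _ y1 y2 Hpow_b Hb_lo) as [z' Hz'].
  rewrite <- mult_IZR, Z.mul_comm in Hz, Hz'.
  exists (2 ^ Z.of_nat a * z)%Z, (2 ^ Z.of_nat b * z')%Z.
  split; [split|tauto].
  - apply in_A_of_real_bounds; lra.
  - left; apply Zpow_divide_mul_pow.
    apply (pow2_exponent_sum_ge _ _ _ (x2 - x1) (y2 - y1)); lra.
Qed.
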